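(* Let $H$ be a complex Hilbert space and $\mathcal S(H)$ the set of bounded self-adjoint operators on $H$ with the logical order $\preceq$. If $A,B,C \in \mathcal S(H)$ and $A \preceq C$, $B \preceq C$, then the meet $A \curlywedge B$ and the join $A \curlyvee B$ of $A$ and $B$ in $(\mathcal S(H),\preceq)$ exist, and \[ A \curlywedge B = C(P_A \wedge P_B), \qquad A \curlyvee B = C(P_A \vee P_B). \]
   Context: For $A \in \mathcal S(H)$, $P_A$ denotes the orthogonal projection onto the closure of the range of $A$; $\wedge$ and $\vee$ denote meet and join in the lattice of orthogonal projections (ordered by $P_1 \le P_2$ iff $P_1P_2 = P_1$). The logical order: $A \preceq B$ iff $B = A + D$ for some $D \in \mathcal S(H)$ with $AD = O$; equivalently $A = BP_A$. Juxtaposition denotes operator composition. *)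

From Stdlib Require Import ClassicalEpsilon.
From mathcomp Require Import all_boot all_algebra complex.
From mathcomp Require Import boolp classical_sets reals topology normedtype.
Import GRing.Theory Num.Theory.
Set Implicit Arguments. Unset Strict Implicit. Unset Printing Implicit Defensive.
Local Open Scope ring_scope.
Local Open Scope classical_set_scope.

Definition hilbert_inner (R : realType) (H : completeNormedModType R[i])
    (ip : H -> H -> R[i]) : Prop :=
  [/\ (forall (a : R[i]) (x y z : H), ip (a *: x + y) z = a * ip x z + ip y z),
      (forall x y : H, ip y x = (ip x y)^*) &
      (forall x : H, ip x x = `|x| ^+ 2)].

(* Bounded (= continuous) linear operators on H; composition is \o. *)
Definition bounded_op (R : realType) (H : completeNormedModType R[i])
    (A : H -> H) : Prop :=
  (forall (a : R[i]) (x y : H), A (a *: x + y) = a *: A x + A y) /\ continuous A.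

Definition selfadj (R : realType) (H : completeNormedModType R[i])
    (ip : H -> H -> R[i]) (A : H -> H) : Prop :=
  bounded_op A /\ (forall x y : H, ip (A x) y = ip x (A y)).

Definition zero_op (R : realType) (H : completeNormedModType R[i]) : H -> H :=
  fun _ => 0.

Definition add_op (R : realType) (H : completeNormedModType R[i])
    (A B : H -> H) : H -> H := fun x => A x + B x.

Definition logical_le (R : realType) (H : completeNormedModType R[i])
    (ip : H -> H -> R[i]) (A B : H -> H) : Prop :=
  exists D : H -> H, [/\ selfadj ip D, A \o D = @zero_op R H & B = add_op A D].

Definition orth_proj (R : realType) (H : completeNormedModType R[i])
    (ip : H -> H -> R[i]) (P : H -> H) : Prop :=
  selfadj ip P /\ P \o P = P.

Definition proj_le (R : realType) (H : completeNormedModType R[i])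
    (P Q : H -> H) : Prop := P \o Q = P.

Definition range_proj (R : realType) (H : completeNormedModType R[i])
    (ip : H -> H -> R[i]) (A : H -> H) : H -> H :=
  epsilon (inhabits (fun x : H => x))
    (fun P => orth_proj ip P /\ range P = closure (range A)).

Definition proj_meet (R : realType) (H : completeNormedModType R[i])
    (ip : H -> H -> R[i]) (P Q : H -> H) : H -> H :=
  epsilon (inhabits (fun x : H => x))
    (fun M => [/\ orth_proj ip M, proj_le M P, proj_le M Q &
       forall N, orth_proj ip N -> proj_le N P -> proj_le N Q -> proj_le N M]).

Definition proj_join (R : realType) (H : completeNormedModType R[i])
    (ip : H -> H -> R[i]) (P Q : H -> H) : H -> H :=
  epsilon (inhabits (fun x : H => x))
    (fun J => [/\ orth_proj ip J, proj_le P J, proj_le Q J &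
       forall N, orth_proj ip N -> proj_le P N -> proj_le Q N -> proj_le J N]).

Definition is_meet_S (R : realType) (H : completeNormedModType R[i])
    (ip : H -> H -> R[i]) (A B X : H -> H) : Prop :=
  [/\ selfadj ip X, logical_le ip X A, logical_le ip X B &
      forall Y, selfadj ip Y -> logical_le ip Y A -> logical_le ip Y B ->
        logical_le ip Y X].

Definition is_join_S (R : realType) (H : completeNormedModType R[i])
    (ip : H -> H -> R[i]) (A B X : H -> H) : Prop :=
  [/\ selfadj ip X, logical_le ip A X, logical_le ip B X &
      forall Y, selfadj ip Y -> logical_le ip A Y -> logical_le ip B Y ->
        logical_le ip X Y].

(* Two facts about the logical order drive the proof: if [Y ≼ Z] then [Z] commutes
   with [P_Y] and [Y = Z P_Y]; conversely [X P ≼ X] whenever the projection [P]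
   commutes with [X].  Since [A = C P_A] and [B = C P_B], the operator [C] commutes
   with [P_A] and [P_B], hence with their meet [M] and join [J].  Then
   [C M = A M ≼ A] (likewise for [B]), and a common lower bound [Y] has [P_Y ≤ M],
   so [Y = (C M) P_Y ≼ C M].  Dually [A = (C J) P_A ≼ C J], and a common upper
   bound [Y] agrees with [C] on the ranges of [P_A] and [P_B], hence on that of [J],
   so [C J = Y J ≼ Y].  The projections [P_A], [M], [J] exist by the Hilbert
   projection theorem, proved with a minimising sequence and the parallelogram law. *)

From mathcomp Require Import all_boot all_algebra complex.
From mathcomp Require Import boolp classical_sets reals topology normedtype.
From Stdlib Require Import ClassicalEpsilon.
From mathcomp Require Import order interval_inference ring lra.
Import Order.TTheory GRing.Theory Num.Theory.
Set Implicit Arguments.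
Unset Strict Implicit.
Local Open Scope ring_scope.
Local Open Scope classical_set_scope.

Lemma comp_eq_app (T U V : Type) (f : U -> V) (g : T -> U) (h : T -> V) :
  f \o g = h -> forall x, f (g x) = h x.
Proof. by move=> <-. Qed.

Section HilbertSpace.
Variables (R : realType) (H : completeNormedModType R[i]) (ip : H -> H -> R[i]).
Hypothesis hH : hilbert_inner ip.

Local Notation "r %:C" := (real_complex R r) : ring_scope.
Local Notation Re := (@complex.Re R).
Local Notation Im := (@complex.Im R).

(** * Inner product and real norm *)

Lemma ipDZl a x y z : ip (a *: x + y) z = a * ip x z + ip y z.
Proof. by case: hH. Qed.

Lemma ip_conj x y : ip y x = (ip x y)^*.
Proof. by case: hH. Qed.

Lemma ip_norm x : ip x x = `|x| ^+ 2.
Proof. by case: hH. Qed.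

Lemma ip0l z : ip 0 z = 0.
Proof.
have /eqP := ipDZl 1 0 0 z.
by rewrite scale1r addr0 mul1r addrC -subr_eq subrr eq_sym => /eqP.
Qed.

Lemma ipDl x y z : ip (x + y) z = ip x z + ip y z.
Proof. by have := ipDZl 1 x y z; rewrite scale1r mul1r. Qed.

Lemma ipZl a x z : ip (a *: x) z = a * ip x z.
Proof. by have := ipDZl a x 0 z; rewrite !addr0 ip0l addr0. Qed.

Lemma ipNl x z : ip (- x) z = - ip x z.
Proof. by rewrite -scaleN1r ipZl mulN1r. Qed.

Lemma ipBl x y z : ip (x - y) z = ip x z - ip y z.
Proof. by rewrite ipDl ipNl. Qed.

Lemma ip0r z : ip z 0 = 0.
Proof. by rewrite ip_conj ip0l rmorph0. Qed.

Lemma ipDr x y z : ip x (y + z) = ip x y + ip x z.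
Proof. by rewrite [LHS]ip_conj ipDl rmorphD !(ip_conj ^~ x). Qed.

Lemma ipZr a x y : ip x (a *: y) = a^* * ip x y.
Proof. by rewrite [LHS]ip_conj ipZl rmorphM (ip_conj ^~ x). Qed.

Lemma ipNr x z : ip z (- x) = - ip z x.
Proof. by rewrite [LHS]ip_conj ipNl rmorphN (ip_conj ^~ z). Qed.

Lemma ipBr x y z : ip z (x - y) = ip z x - ip z y.
Proof. by rewrite ipDr ipNr. Qed.

Lemma ip_self_eq0 x : ip x x = 0 -> x = 0.
Proof. by rewrite ip_norm => /eqP; rewrite expf_eq0 /= normr_eq0 => /eqP. Qed.

Lemma ip_injl x x' : (forall y, ip x y = ip x' y) -> x = x'.
Proof.
by move=> h; apply/eqP; rewrite -subr_eq0; apply/eqP/ip_self_eq0; rewrite ipBl h subrr.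
Qed.

(* The norm of [H] takes values in [R[i]]; inequalities are handled through its real part. *)
Definition rnorm (x : H) : R := Re `|x|.

Lemma ge0_real (c : R[i]) : 0 <= c -> c = (Re c)%:C.
Proof. by case: c => a b; rewrite lecE /= => /andP[/eqP -> _]. Qed.

Lemma rnormE x : `|x| = (rnorm x)%:C.
Proof. exact/ge0_real/normr_ge0. Qed.

Lemma rnorm_ge0 x : 0 <= rnorm x.
Proof. by have := normr_ge0 x; rewrite rnormE lecR. Qed.

Lemma rnormD x y : rnorm (x + y) <= rnorm x + rnorm y.
Proof. by have := ler_normD x y; rewrite !rnormE -rmorphD lecR. Qed.

Lemma rnormN x : rnorm (- x) = rnorm x.
Proof. by rewrite /rnorm normrN. Qed.

Lemma rnorm0 : rnorm 0 = 0.
Proof. by rewrite /rnorm normr0. Qed.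

Lemma ip_selfE x : ip x x = (rnorm x ^+ 2)%:C.
Proof. by rewrite ip_norm rnormE rmorphXn. Qed.

Lemma sqr_rnorm x : rnorm x ^+ 2 = Re (ip x x).
Proof. by rewrite ip_selfE. Qed.

Lemma ReD (x y : R[i]) : Re (x + y) = Re x + Re y.
Proof. by case: x; case: y. Qed.

Lemma ReB (x y : R[i]) : Re (x - y) = Re x - Re y.
Proof. by case: x; case: y. Qed.

Lemma ReM (x y : R[i]) : Re (x * y) = Re x * Re y - Im x * Im y.
Proof. by case: x; case: y. Qed.

Lemma Re_conj (x : R[i]) : Re x^* = Re x.
Proof. by case: x. Qed.

Lemma parallelogram u v :
  rnorm (u + v) ^+ 2 + rnorm (u - v) ^+ 2 = 2 * rnorm u ^+ 2 + 2 * rnorm v ^+ 2.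
Proof.
rewrite !sqr_rnorm -ReD.
have -> : ip (u + v) (u + v) + ip (u - v) (u - v) = ip u u + ip u u + (ip v v + ip v v).
  by rewrite ?ipDl ?ipDr ?ipNl ?ipNr; ring.
by rewrite !ReD; ring.
Qed.

Lemma sqr_rnorm_subZ z y (t : R) :
  rnorm (z - t%:C *: y) ^+ 2 = rnorm z ^+ 2 - 2 * t * Re (ip z y) + t ^+ 2 * rnorm y ^+ 2.
Proof.
have conj_t : (t%:C)^* = t%:C by exact: conjc_real.
rewrite !sqr_rnorm ipBl !ipBr !ipZl !ipZr conj_t (ip_conj y z).
by rewrite !ReB !(ReM t%:C) /= Re_conj; ring.
Qed.

(* With [a = Re <z, y>] and [b = |y|^2], the choice [t = a / (b + 1)] makes
   [|z - t y|^2 < |z|^2] unless [a = 0]. *)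
Lemma minimal_Re_ip_eq0 z y :
  (forall t : R, rnorm z <= rnorm (z - t%:C *: y)) -> Re (ip z y) = 0.
Proof.
move=> hmin; set a := Re (ip z y); set b := rnorm y ^+ 2.
have b0 : 0 <= b by rewrite exprn_ge0 // rnorm_ge0.
have hb1 : 0 < b + 1 by lra.
have := hmin (a / (b + 1)).
rewrite -ler_sqr ?nnegrE ?rnorm_ge0 // sqr_rnorm_subZ -/a -/b => hq.
have e : 2 * (a / (b + 1)) * a - (a / (b + 1)) ^+ 2 * b = a ^+ 2 * (b + 2) / (b + 1) ^+ 2.
  by field; lra.
have : a ^+ 2 * (b + 2) / (b + 1) ^+ 2 <= 0 by rewrite -e; lra.
rewrite pmulr_lle0 ?invr_gt0 ?exprn_gt0 //; nra.
Qed.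


(** * The projection theorem *)

Lemma natSinv_lt_eventually (d : R) : 0 < d ->
  exists N, forall n, (N <= n)%N -> n.+1%:R^-1 < d.
Proof. by move=> d0; have [N _ hN] := near_infty_natSinv_lt (PosNum d0); exists N. Qed.

Definition subspace (M : set H) := M 0 /\ (forall a x y, M x -> M y -> M (a *: x + y)).

Lemma subspaceD M x y : subspace M -> M x -> M y -> M (x + y).
Proof. by case=> _ hM Mx My; have := hM 1 x y Mx My; rewrite scale1r. Qed.

Lemma subspaceZ M a x : subspace M -> M x -> M (a *: x).
Proof. by case=> M0 hM Mx; have := hM a x 0 Mx M0; rewrite addr0. Qed.

Lemma subspaceB M x y : subspace M -> M x -> M y -> M (x - y).
Proof. by move=> hM Mx My; rewrite -scaleN1r addrC; apply: hM.2. Qed.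

Lemma subspaceI M N : subspace M -> subspace N -> subspace (M `&` N).
Proof.
move=> [M0 hM] [N0 hN]; split=> // a x y [Mx Nx] [My Ny].
by split; [exact: hM | exact: hN].
Qed.

(* The parallelogram law at the midpoint of [m1] and [m2], which lies in [M]. *)
Lemma near_minimizers_close M x D m1 m2 : subspace M -> 0 <= D ->
    (forall m, M m -> D <= rnorm (x - m)) -> M m1 -> M m2 ->
  rnorm (m1 - m2) ^+ 2 <= 2 * rnorm (x - m1) ^+ 2 + 2 * rnorm (x - m2) ^+ 2 - 4 * D ^+ 2.
Proof.
move=> hM D0 hD M1 M2.
pose w := (1 / 2 : R[i]) *: (m1 + m2).
have Dw : D <= rnorm (x - w) by apply: hD; apply: (subspaceZ _ hM); exact: subspaceD.
have ww : w + w = m1 + m2 by rewrite -scalerDl -splitr scale1r.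
have hw : (x - w) + (x - w) = (x - m1) + (x - m2).
  by rewrite addrACA [in RHS]addrACA -!opprD ww.
have hm : (x - m1) - (x - m2) = - (m1 - m2) by rewrite !opprB addrC addrA subrK.
have := parallelogram (x - m1) (x - m2); rewrite -hw hm rnormN.
have := parallelogram (x - w) (x - w); rewrite subrr rnorm0 expr0n addr0 => ->.
have : D ^+ 2 <= rnorm (x - w) ^+ 2 by rewrite ler_sqr ?nnegrE ?rnorm_ge0.
lra.
Qed.

Lemma minimizing_seq_cauchy M x D (u : nat -> H) : subspace M -> 0 <= D ->
    (forall m, M m -> D <= rnorm (x - m)) -> (forall n, M (u n)) ->
    (forall n, rnorm (x - u n) < D + n.+1%:R^-1) ->
  cauchy (u @ \oo).
Proof.
move=> hM D0 hD Mu hu.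
have inv_bounds k : 0 <= (k.+1%:R^-1 : R) <= 1.
  by rewrite invr_ge0 ler0n invf_le1 ?ltr0Sn // ler1n.
have close k l : rnorm (u k - u l) ^+ 2 <= 2 * (k.+1%:R^-1 + l.+1%:R^-1) * (2 * D + 1).
  have := near_minimizers_close hM D0 hD (Mu k) (Mu l).
  have := hu k; have := hu l; have := rnorm_ge0 (x - u k); have := rnorm_ge0 (x - u l).
  have := inv_bounds k; have := inv_bounds l.
  set a := k.+1%:R^-1; set b := l.+1%:R^-1 => /andP[b0 b1] /andP[a0 a1]; nra.
apply: cauchy_exP => eps eps0.
have e0 : 0 < Re eps by move: eps0; rewrite ltcE => /andP[].
rewrite (ge0_real (ltW eps0)); set e := Re eps in e0 *.
have hK : 0 < 2 * D + 1 by lra.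
set d := e ^+ 2 / (4 * (2 * D + 1)).
have d0 : 0 < d by rewrite divr_gt0 ?exprn_gt0 //; lra.
have [N hN] := natSinv_lt_eventually d0.
exists (u N), N => // n /= hn.
rewrite -ball_normE /ball_ /= rnormE ltcR -(ltr_sqr (rnorm_ge0 _)) ?nnegrE ?ltW //.
apply: le_lt_trans (close N n) _.
have -> : e ^+ 2 = 4 * (2 * D + 1) * d by rewrite /d; field; lra.
have := hN N (leqnn N); have := hN n hn.
set a := N.+1%:R^-1; set b := n.+1%:R^-1; nra.
Qed.

Lemma minimizing_seq_lim_le x D (u : nat -> H) m : u @ \oo --> m ->
  (forall n, rnorm (x - u n) < D + n.+1%:R^-1) -> rnorm (x - m) <= D.
Proof.
move=> um hu; rewrite leNgt; apply/negP => hlt.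
set eps := (rnorm (x - m) - D) / 3.
have eps0 : 0 < eps by rewrite divr_gt0 //; lra.
have eps0C : 0 < eps%:C by rewrite ltcR.
have [N1 _ hN1] := cvgr_dist_lt _ _ um _ eps0C.
have [N2 hN2] := natSinv_lt_eventually eps0.
pose k := maxn N1 N2.
have := hN1 k (leq_maxl N1 N2); rewrite /= rnormE ltcR.
have := hN2 k (leq_maxr N1 N2); have := hu k.
have : rnorm (x - m) <= rnorm (x - u k) + rnorm (m - u k).
  by rewrite -(rnormN (m - u k)) opprB -{1}(subrK (u k) x) -addrA rnormD.
rewrite /eps; set a := k.+1%:R^-1; lra.
Qed.

Lemma closed_subspace_dist_attained M x : subspace M -> closed M ->
  exists2 m, M m & forall m', M m' -> rnorm (x - m) <= rnorm (x - m').
Proof.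
move=> hM cM.
pose S := [set rnorm (x - m) | m in M].
have S_lb : lbound S 0 by move=> _ [m _ <-]; exact: rnorm_ge0.
have S_inf : has_inf S by split; [exists (rnorm (x - 0)), 0; first exact: hM.1 | exists 0].
set D := inf S.
have DS m : M m -> D <= rnorm (x - m) by move=> Mm; apply: (ge_inf S_inf.2); exists m.
have D0 : 0 <= D := lb_le_inf S_inf.1 S_lb.
have near_inf n : exists m, M m /\ rnorm (x - m) < D + n.+1%:R^-1.
  have n0 : 0 < n.+1%:R^-1 :> R by rewrite invr_gt0.
  by have [_ [m Mm <-] hm] := inf_adherent n0 S_inf; exists m.
have [u hu] := boolp.choice near_inf.
have Mu n : M (u n) by case: (hu n).
have xu n : rnorm (x - u n) < D + n.+1%:R^-1 by case: (hu n).
have cvu : u @ \oo --> lim (u @ \oo).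
  exact/cauchy_cvgP/(minimizing_seq_cauchy hM D0 DS Mu xu).
exists (lim (u @ \oo)); first by apply: (closed_cvg M cM _ _ cvu); exists 0%N.
by move=> m' Mm'; apply: le_trans (DS _ Mm'); exact: minimizing_seq_lim_le cvu xu.
Qed.

Lemma dist_minimizer_orthogonal M x m : subspace M -> M m ->
    (forall m', M m' -> rnorm (x - m) <= rnorm (x - m')) ->
  forall y, M y -> ip (x - m) y = 0.
Proof.
move=> hM Mm hmin.
have Re0 y : M y -> Re (ip (x - m) y) = 0.
  move=> My; apply: minimal_Re_ip_eq0 => t.
  have -> : x - m - t%:C *: y = x - (t%:C *: y + m) by rewrite opprD addrA addrAC.
  exact/hmin/hM.2.
(* Testing with [y] and [i y] kills the real and the imaginary part. *)
move=> y My; have := Re0 _ (subspaceZ 'i%C hM My); rewrite ipZr ReM /=.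
have := Re0 _ My; case: (ip (x - m) y) => a b /= -> h.
by apply/eqP; rewrite eq_complex /= eqxx /=; apply/eqP; lra.
Qed.

Definition lin_op (A : H -> H) := forall a x y, A (a *: x + y) = a *: A x + A y.
Definition sym_op (A : H -> H) := forall x y, ip (A x) y = ip x (A y).
Definition proj_compl (P : H -> H) : H -> H := fun x => x - P x.

Section LinearOperator.
Variable A : H -> H.
Hypothesis hA : lin_op A.

Lemma lin_op0 : A 0 = 0.
Proof.
by have /eqP := hA 1 0 0; rewrite !scale1r addr0 addrC -subr_eq subrr eq_sym => /eqP.
Qed.

Lemma lin_opD x y : A (x + y) = A x + A y.
Proof. by have := hA 1 x y; rewrite !scale1r. Qed.

Lemma lin_opZ a x : A (a *: x) = a *: A x.
Proof. by have := hA a x 0; rewrite !addr0 lin_op0 addr0. Qed.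

Lemma lin_opB x y : A (x - y) = A x - A y.
Proof. by rewrite lin_opD -scaleN1r lin_opZ scaleN1r. Qed.

End LinearOperator.

Lemma selfadj_lin A : selfadj ip A -> lin_op A.
Proof. by case=> [[]]. Qed.

Lemma selfadj_sym A : selfadj ip A -> sym_op A.
Proof. by case. Qed.

Lemma selfadj_cont A : selfadj ip A -> continuous A.
Proof. by case=> [[]]. Qed.

Lemma selfadj_id : selfadj ip id.
Proof. by split; [split=> // x; exact: cvg_id | ]. Qed.

Lemma selfadj_sub A B : selfadj ip A -> selfadj ip B -> selfadj ip (fun x => A x - B x).
Proof.
move=> [[lA cA] sA] [[lB cB] sB]; split; [split|].
- by move=> a x y; rewrite lA lB scalerBr addrACA opprD.
- by move=> x; apply: continuousB; [exact: cA | exact: cB].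
- by move=> x y; rewrite ipBl ipBr sA sB.
Qed.

Lemma selfadj_comp A B : selfadj ip A -> selfadj ip B -> A \o B = B \o A ->
  selfadj ip (A \o B).
Proof.
move=> [[lA cA] sA] [[lB cB] sB] AB; split; [split|].
- by move=> a x y /=; rewrite lB lA.
- by move=> x; apply: continuous_comp; [exact: cB | exact: cA].
- by move=> x y /=; rewrite sA sB -[B (A y)]/((B \o A) y) -AB.
Qed.

Lemma comp_sym_swap S T U : sym_op S -> sym_op T -> sym_op U -> S \o T = U -> T \o S = U.
Proof.
move=> sS sT sU ST; subst U; apply/funext => x /=; apply: ip_injl => y.
by rewrite sT sS sU.
Qed.

Lemma comp_sym_eq0 S T : sym_op S -> sym_op T ->
  S \o T = @zero_op R H -> T \o S = @zero_op R H.
Proof. by move=> sS sT; apply: comp_sym_swap => // x y; rewrite /zero_op ip0l ip0r. Qed.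

Lemma closure_min (A B : set H) : closed B -> A `<=` B -> closure A `<=` B.
Proof. by move=> cB AB; rewrite closureE; exact: smallest_sub. Qed.

Lemma closed_kernel (E : H -> H) : continuous E -> closed [set x | E x = 0].
Proof.
have c0 : closed [set (0 : H)].
  exact/accessible_closed_set1/hausdorff_accessible/norm_hausdorff.
by move=> cE; exact: (continuous_closedP E).1 cE _ c0.
Qed.

Lemma closed_preimage_affine (a : R[i]) (c : H) (B : set H) :
  closed B -> closed [set z | B (a *: z + c)].
Proof.
move=> cB; apply: (continuous_closedP _).1 cB => x.
by apply: continuousD; [exact: scaler_continuous | exact: cst_continuous].
Qed.

Lemma closure_subspace M : subspace M -> subspace (closure M).
Proof.
move=> hM; split; first exact/subset_closure/hM.1.
have closureMD a m : M m -> closure M `<=` [set z | closure M (a *: z + m)].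
  move=> Mm; apply: closure_min; first exact: closed_preimage_affine (@closed_closure _ M).
  by move=> z Mz; apply/subset_closure/hM.2.
move=> a z w Mz Mw.
have : closure M `<=` [set v | closure M (1 *: v + a *: z)].
  apply: closure_min; first exact: closed_preimage_affine (@closed_closure _ M).
  by move=> v Mv /=; rewrite scale1r addrC; exact: closureMD.
by move=> /(_ w Mw) /=; rewrite scale1r addrC.
Qed.

Lemma range_subspace A : lin_op A -> subspace (range A).
Proof.
move=> hA; split; first by exists 0 => //; exact: lin_op0.
by move=> a _ _ [x _ <-] [y _ <-]; exists (a *: x + y).
Qed.

Lemma sym_idem_rnorm_le P v : lin_op P -> sym_op P -> P \o P = P -> rnorm (P v) <= rnorm v.
Proof.
move=> lP sP PP.
have orth : ip (v - P v) (P v) = 0.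
  by rewrite -sP (lin_opB lP) (comp_eq_app PP) subrr ip0l.
have orth' : ip (P v) (v - P v) = 0 by rewrite ip_conj orth rmorph0.
have pyth : ip v v = ip (v - P v) (v - P v) + ip (P v) (P v).
  rewrite {1 2}(_ : v = v - P v + P v); last by rewrite subrK.
  by rewrite ipDl (ipDr (v - P v)) (ipDr (P v)) orth orth' addr0 add0r.
have : rnorm v ^+ 2 = rnorm (v - P v) ^+ 2 + rnorm (P v) ^+ 2 by rewrite !sqr_rnorm pyth ReD.
have := rnorm_ge0 v; have := rnorm_ge0 (v - P v); have := rnorm_ge0 (P v); nra.
Qed.

Lemma lin_contraction_continuous A : lin_op A -> (forall v, rnorm (A v) <= rnorm v) ->
  continuous A.
Proof.
move=> hA hle x; apply/cvgrPdist_lt => eps eps0.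
apply: filterS (cvgr_dist_lt _ _ (@cvg_id _ (nbhs x)) _ eps0) => t /= xt.
by apply: le_lt_trans xt; rewrite -(lin_opB hA) !rnormE lecR.
Qed.

Lemma orth_proj_onto M : subspace M -> closed M -> exists P, orth_proj ip P /\ range P = M.
Proof.
move=> hM cM.
have nearest x : exists m, M m /\ forall y, M y -> ip (x - m) y = 0.
  have [m Mm hm] := closed_subspace_dist_attained x hM cM.
  by exists m; split=> //; exact: dist_minimizer_orthogonal hM Mm hm.
have [P hP] := boolp.choice nearest.
have PM x : M (P x) by case: (hP x).
have Pperp x y : M y -> ip (x - P x) y = 0 by case: (hP x) => _; apply.
have P_uniq x m : M m -> (forall y, M y -> ip (x - m) y = 0) -> P x = m.
  move=> Mm hm; apply/eqP; rewrite -subr_eq0; apply/eqP/ip_self_eq0.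
  have d : (x - m) - (x - P x) = P x - m by rewrite opprB addrC addrA subrK.
  have Md : M (P x - m) by exact: subspaceB.
  by rewrite -{1}d ipBl hm // Pperp // subrr.
have lP : lin_op P.
  move=> a x y; apply: P_uniq; first exact: hM.2.
  move=> w Mw; have -> : a *: x + y - (a *: P x + P y) = a *: (x - P x) + (y - P y).
    by rewrite scalerBr opprD addrACA.
  by rewrite ipDl ipZl !Pperp // mulr0 addr0.
have sP : sym_op P.
  move=> x y; have /eqP := Pperp x _ (PM y).
  have /eqP := Pperp y _ (PM x); rewrite ip_conj conjC_eq0.
  by rewrite ipBl ipBr !subr_eq0 => /eqP -> /eqP ->.
have PP : P \o P = P by apply/funext => x /=; apply: P_uniq => // y _; rewrite subrr ip0l.
have cP : continuous P.
  by apply: (lin_contraction_continuous lP) => v; exact: sym_idem_rnorm_le lP sP PP.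
exists P; split; first by split; first split.
apply/funext => y; apply/propext; split; first by case=> x _ <-.
by move=> My; exists y => //; apply: P_uniq => // w _; rewrite subrr ip0l.
Qed.

(** * Orthogonal projections and their lattice *)

Section OrthogonalProjection.
Variable P : H -> H.
Hypothesis hP : orth_proj ip P.

Lemma orth_proj_selfadj : selfadj ip P. Proof. by case: hP. Qed.
Lemma orth_proj_lin : lin_op P. Proof. exact/selfadj_lin/orth_proj_selfadj. Qed.
Lemma orth_proj_sym : sym_op P. Proof. exact/selfadj_sym/orth_proj_selfadj. Qed.

Lemma orth_projK x : P (P x) = P x.
Proof. by case: hP => _ /comp_eq_app. Qed.

Lemma orth_proj_rangeP y : range P y <-> P y = y.
Proof. by split=> [[x _ <-]|Py]; [exact: orth_projK | exists y]. Qed.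

Lemma orth_proj_compl : orth_proj ip (proj_compl P).
Proof.
split; first exact: selfadj_sub selfadj_id orth_proj_selfadj.
by apply/funext => x; rewrite /proj_compl /= (lin_opB orth_proj_lin) orth_projK subrr subr0.
Qed.

Lemma orth_proj_range_closed : closed (range P).
Proof.
have -> : range P = [set x | proj_compl P x = 0].
  apply/funext => y; apply/propext; rewrite orth_proj_rangeP /proj_compl /=.
  by split=> [->|/eqP]; [rewrite subrr | rewrite subr_eq0 => /eqP <-].
exact: closed_kernel (selfadj_cont (selfadj_sub selfadj_id orth_proj_selfadj)).
Qed.

Lemma orth_proj_range_subspace : subspace (range P).
Proof. exact/range_subspace/orth_proj_lin. Qed.

End OrthogonalProjection.

Lemma orth_proj_compl_rangeP P : orth_proj ip P ->
  forall y, range (proj_compl P) y <-> P y = 0.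
Proof.
move=> hP y; rewrite (orth_proj_rangeP (orth_proj_compl hP)) /proj_compl.
by split=> [/eqP|->]; [rewrite subr_eq addrC -subr_eq subrr eq_sym => /eqP | rewrite subr0].
Qed.

Lemma proj_leC P Q : orth_proj ip P -> orth_proj ip Q -> proj_le P Q <-> Q \o P = P.
Proof.
move=> /orth_proj_sym sP /orth_proj_sym sQ.
by split; apply: comp_sym_swap.
Qed.

Lemma proj_le_range P Q : orth_proj ip P -> orth_proj ip Q ->
  proj_le P Q <-> range P `<=` range Q.
Proof.
move=> hP hQ; rewrite proj_leC //; split=> [QP _ [x _ <-]|PQ].
  by apply/(orth_proj_rangeP hQ); exact: (comp_eq_app QP).
by apply/funext => x /=; apply/(orth_proj_rangeP hQ)/PQ; exists x.
Qed.

Lemma proj_le_anti P Q : orth_proj ip P -> orth_proj ip Q ->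
  proj_le P Q -> proj_le Q P -> P = Q.
Proof. by move=> hP hQ /(proj_leC hP hQ) QP QP'; rewrite -QP. Qed.

Lemma range_projP A : lin_op A ->
  orth_proj ip (range_proj ip A) /\ range (range_proj ip A) = closure (range A).
Proof.
move=> hA.
have := orth_proj_onto (closure_subspace (range_subspace hA)) (@closed_closure _ (range A)).
exact: epsilon_spec.
Qed.

Lemma proj_meetP P Q : orth_proj ip P -> orth_proj ip Q ->
  orth_proj ip (proj_meet ip P Q) /\ range (proj_meet ip P Q) = range P `&` range Q.
Proof.
move=> hP hQ.
have [M [hM rM]] := orth_proj_onto
  (subspaceI (orth_proj_range_subspace hP) (orth_proj_range_subspace hQ))
  (closedI (orth_proj_range_closed hP) (orth_proj_range_closed hQ)).
have M_glb N : orth_proj ip N -> proj_le N P -> proj_le N Q -> proj_le N M.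
  move=> hN /(proj_le_range hN hP) NP /(proj_le_range hN hQ) NQ.
  by apply/(proj_le_range hN hM); rewrite rM => y Ny; split; [exact: NP | exact: NQ].
have MP : proj_le M P by apply/(proj_le_range hM hP); rewrite rM => y [].
have MQ : proj_le M Q by apply/(proj_le_range hM hQ); rewrite rM => y [].
have : exists M, [/\ orth_proj ip M, proj_le M P, proj_le M Q &
    forall N, orth_proj ip N -> proj_le N P -> proj_le N Q -> proj_le N M].
  by exists M.
move=> /(epsilon_spec (inhabits (fun x : H => x))) [hM' M'P M'Q M'_glb].
suff -> : proj_meet ip P Q = M by [].
exact: proj_le_anti hM' hM (M_glb _ hM' M'P M'Q) (M'_glb _ hM MP MQ).
Qed.

Lemma proj_joinP P Q : orth_proj ip P -> orth_proj ip Q ->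
  [/\ orth_proj ip (proj_join ip P Q), proj_le P (proj_join ip P Q),
      proj_le Q (proj_join ip P Q) &
      proj_join ip P Q = proj_compl (proj_meet ip (proj_compl P) (proj_compl Q))].
Proof.
move=> hP hQ.
have [hM rM] := proj_meetP (orth_proj_compl hP) (orth_proj_compl hQ).
set M := proj_meet ip _ _ in hM rM *; set J := proj_compl M.
have hJ : orth_proj ip J := orth_proj_compl hM.
have inM x : range M (M x) by exists x.
have PM x : P (M x) = 0 by move: (inM x); rewrite rM => -[/(orth_proj_compl_rangeP hP)].
have QM x : Q (M x) = 0 by move: (inM x); rewrite rM => -[_ /(orth_proj_compl_rangeP hQ)].
have PJ : proj_le P J.
  by apply/funext => x; rewrite /J /proj_compl /= (lin_opB (orth_proj_lin hP)) PM subr0.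
have QJ : proj_le Q J.
  by apply/funext => x; rewrite /J /proj_compl /= (lin_opB (orth_proj_lin hQ)) QM subr0.
have J_lub N : orth_proj ip N -> proj_le P N -> proj_le Q N -> proj_le J N.
  move=> hN PN QN; apply/funext => x /=.
  have : range M (x - N x).
    rewrite rM; split; apply/orth_proj_compl_rangeP => //.
      by rewrite (lin_opB (orth_proj_lin hP)) (comp_eq_app PN) subrr.
    by rewrite (lin_opB (orth_proj_lin hQ)) (comp_eq_app QN) subrr.
  move/(orth_proj_rangeP hM); rewrite (lin_opB (orth_proj_lin hM)) /J /proj_compl => e.
  by rewrite -(subrKA (M x)) e addrC subrKA.
have : exists J, [/\ orth_proj ip J, proj_le P J, proj_le Q J &
    forall N, orth_proj ip N -> proj_le P N -> proj_le Q N -> proj_le J N].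
  by exists J.
move=> /(epsilon_spec (inhabits (fun x : H => x))) [hJ' PJ' QJ' J'_lub].
suff e : proj_join ip P Q = J by rewrite e.
exact: proj_le_anti hJ' hJ (J'_lub _ hJ PJ QJ) (J_lub _ hJ' PJ' QJ').
Qed.

Lemma proj_meet_comm T P Q : selfadj ip T -> orth_proj ip P -> orth_proj ip Q ->
  T \o P = P \o T -> T \o Q = Q \o T -> T \o proj_meet ip P Q = proj_meet ip P Q \o T.
Proof.
move=> hT hP hQ TP TQ; have [hM rM] := proj_meetP hP hQ.
set M := proj_meet ip P Q in hM rM *.
have MTM z : M (T (M z)) = T (M z).
  apply/(orth_proj_rangeP hM); have : range M (M z) by exists z.
  rewrite rM => -[/(orth_proj_rangeP hP) PMz /(orth_proj_rangeP hQ) QMz].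
  split; apply/orth_proj_rangeP => //.
    by rewrite (comp_eq_app (esym TP)) /= PMz.
  by rewrite (comp_eq_app (esym TQ)) /= QMz.
(* [T] maps [range M] into itself, so [M T M = T M]; taking adjoints gives [M T M = M T]. *)
apply/funext => x /=; apply: ip_injl => y.
have sM := orth_proj_sym hM; have sT := selfadj_sym hT.
by rewrite -MTM sM sT sM MTM sM sT.
Qed.

Lemma proj_compl_comm T P : lin_op T -> T \o P = P \o T ->
  T \o proj_compl P = proj_compl P \o T.
Proof.
by move=> hT TP; apply/funext => x; rewrite /proj_compl /= (lin_opB hT) (comp_eq_app TP).
Qed.

Lemma proj_join_comm T P Q : selfadj ip T -> orth_proj ip P -> orth_proj ip Q ->
  T \o P = P \o T -> T \o Q = Q \o T -> T \o proj_join ip P Q = proj_join ip P Q \o T.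
Proof.
move=> hT hP hQ TP TQ; have [_ _ _ ->] := proj_joinP hP hQ.
apply/(proj_compl_comm (selfadj_lin hT))/proj_meet_comm => //; try exact: orth_proj_compl.
  exact: proj_compl_comm (selfadj_lin hT) TP.
exact: proj_compl_comm (selfadj_lin hT) TQ.
Qed.

Lemma proj_join_kernel T P Q : selfadj ip T -> orth_proj ip P -> orth_proj ip Q ->
  T \o P = @zero_op R H -> T \o Q = @zero_op R H -> T \o proj_join ip P Q = @zero_op R H.
Proof.
move=> hT hP hQ TP TQ; have [_ _ _ ->] := proj_joinP hP hQ.
have [hM rM] := proj_meetP (orth_proj_compl hP) (orth_proj_compl hQ).
set M := proj_meet ip _ _ in hM rM *.
have PT := comp_sym_eq0 (selfadj_sym hT) (orth_proj_sym hP) TP.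
have QT := comp_sym_eq0 (selfadj_sym hT) (orth_proj_sym hQ) TQ.
apply: comp_sym_eq0 (orth_proj_sym (orth_proj_compl hM)) (selfadj_sym hT) _.
apply/funext => x; rewrite /proj_compl /zero_op /=; apply/eqP; rewrite subr_eq0 eq_sym.
apply/eqP/(orth_proj_rangeP hM); rewrite rM.
split; [apply/(orth_proj_compl_rangeP hP) | apply/(orth_proj_compl_rangeP hQ)].
  exact: (comp_eq_app PT x).
exact: (comp_eq_app QT x).
Qed.

(** * The logical order *)

Lemma range_projK A : lin_op A -> range_proj ip A \o A = A.
Proof.
move=> hA; have [hP rP] := range_projP hA; apply/funext => x /=.
by apply/(orth_proj_rangeP hP); rewrite rP; apply: subset_closure; exists x.
Qed.

Lemma comp_range_proj A : selfadj ip A -> A \o range_proj ip A = A.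
Proof.
move=> hA; have [hP _] := range_projP (selfadj_lin hA).
exact: comp_sym_swap (orth_proj_sym hP) (selfadj_sym hA) (selfadj_sym hA)
  (range_projK (selfadj_lin hA)).
Qed.

Lemma range_proj_kernel A E : lin_op A -> continuous E -> E \o A = @zero_op R H ->
  E \o range_proj ip A = @zero_op R H.
Proof.
move=> hA cE EA; have [_ rP] := range_projP hA; apply/funext => x /=.
have : closure (range A) `<=` [set z | E z = 0].
  apply: closure_min; first exact: closed_kernel.
  by move=> _ [y _ <-]; exact: (comp_eq_app EA y).
by apply; rewrite -rP; exists x.
Qed.

Lemma range_proj_le A P : lin_op A -> orth_proj ip P -> P \o A = A ->
  proj_le (range_proj ip A) P.
Proof.
move=> hA hP PA; have [hS rS] := range_projP hA.
apply/(proj_le_range hS hP); rewrite rS; apply: closure_min.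
  exact: orth_proj_range_closed.
by move=> _ [x _ <-]; exists (A x) => //; exact: (comp_eq_app PA x).
Qed.

(* The witness is [D = X (1 - P)]: then [X P D = X^2 P (1 - P) = 0]. *)
Lemma logical_le_comp_proj X P : selfadj ip X -> orth_proj ip P -> X \o P = P \o X ->
  logical_le ip (X \o P) X.
Proof.
move=> hX hP XP; exists (fun x => X x - X (P x)); split.
- exact: selfadj_sub hX (selfadj_comp hX (orth_proj_selfadj hP) XP).
- apply/funext => x; rewrite /zero_op /= (lin_opB (orth_proj_lin hP)).
  by rewrite (lin_opB (selfadj_lin hX)) !(comp_eq_app (esym XP)) /= (orth_projK hP) subrr.
- by apply/funext => x; rewrite /add_op /= addrC subrK.
Qed.

Lemma logical_le_range_proj Y Z : selfadj ip Y -> selfadj ip Z -> logical_le ip Y Z ->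
  Z \o range_proj ip Y = Y /\ range_proj ip Y \o Z = Y.
Proof.
move=> hY hZ [E [hE YE ->]].
have [hS _] := range_projP (selfadj_lin hY).
have EY := comp_sym_eq0 (selfadj_sym hY) (selfadj_sym hE) YE.
have ES := range_proj_kernel (selfadj_lin hY) (selfadj_cont hE) EY.
have SE := comp_sym_eq0 (selfadj_sym hE) (orth_proj_sym hS) ES.
split; apply/funext => x; rewrite /add_op /=.
  by rewrite (comp_eq_app (comp_range_proj hY)) (comp_eq_app ES) addr0.
rewrite (lin_opD (orth_proj_lin hS)) (comp_eq_app SE) addr0.
exact: (comp_eq_app (range_projK (selfadj_lin hY))).
Qed.

Lemma logical_meet A B C : selfadj ip A -> selfadj ip B -> selfadj ip C ->
    logical_le ip A C -> logical_le ip B C ->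
  is_meet_S ip A B (C \o proj_meet ip (range_proj ip A) (range_proj ip B)).
Proof.
move=> hA hB hC leAC leBC.
have [hP _] := range_projP (selfadj_lin hA).
have [hQ _] := range_projP (selfadj_lin hB).
set P := range_proj ip A in hP leAC *; set Q := range_proj ip B in hQ leBC *.
have [CP PC] := logical_le_range_proj hA hC leAC.
have [CQ QC] := logical_le_range_proj hB hC leBC.
have [hM rM] := proj_meetP hP hQ; set M := proj_meet ip P Q in hM rM *.
have PM : P \o M = M by apply/(proj_leC hM hP)/(proj_le_range hM hP); rewrite rM => y [].
have QM : Q \o M = M by apply/(proj_leC hM hQ)/(proj_le_range hM hQ); rewrite rM => y [].
have CM : C \o M = M \o C.
  by apply: (proj_meet_comm hC hP hQ); [rewrite CP PC | rewrite CQ QC].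
have hX := selfadj_comp hC (orth_proj_selfadj hM) CM.
have lower D E : selfadj ip D -> orth_proj ip E -> C \o E = D -> E \o M = M ->
    logical_le ip (C \o M) D.
  move=> hD hE CE EM; have DM : D \o M = C \o M by rewrite -CE -compA EM.
  have MD := comp_sym_swap (selfadj_sym hD) (orth_proj_sym hM) (selfadj_sym hX) DM.
  by rewrite -DM; apply: (logical_le_comp_proj hD hM); rewrite DM MD.
split=> //; [exact: lower hA hP CP PM | exact: lower hB hQ CQ QM |].
move=> Y hY leYA leYB.
have [hS _] := range_projP (selfadj_lin hY); set S := range_proj ip Y in hS *.
have [AS _] := logical_le_range_proj hY hA leYA.
have [BS _] := logical_le_range_proj hY hB leYB.
have SP : proj_le S P.
  apply: (range_proj_le (selfadj_lin hY) hP).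
  by rewrite -AS compA (range_projK (selfadj_lin hA)).
have SQ : proj_le S Q.
  apply: (range_proj_le (selfadj_lin hY) hQ).
  by rewrite -BS compA (range_projK (selfadj_lin hB)).
have MS : M \o S = S.
  apply/(proj_leC hS hM)/(proj_le_range hS hM); rewrite rM => y Sy.
  by split; [exact: (proj_le_range hS hP).1 SP _ Sy | exact: (proj_le_range hS hQ).1 SQ _ Sy].
have XS : (C \o M) \o S = Y.
  by rewrite -compA MS -{1}((proj_leC hS hP).1 SP) compA CP AS.
have SX := comp_sym_swap (selfadj_sym hX) (orth_proj_sym hS) (selfadj_sym hY) XS.
by rewrite -{1}XS; apply: (logical_le_comp_proj hX hS); rewrite XS SX.
Qed.

Lemma logical_join A B C : selfadj ip A -> selfadj ip B -> selfadj ip C ->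
    logical_le ip A C -> logical_le ip B C ->
  is_join_S ip A B (C \o proj_join ip (range_proj ip A) (range_proj ip B)).
Proof.
move=> hA hB hC leAC leBC.
have [hP _] := range_projP (selfadj_lin hA).
have [hQ _] := range_projP (selfadj_lin hB).
set P := range_proj ip A in hP leAC *; set Q := range_proj ip B in hQ leBC *.
have [CP PC] := logical_le_range_proj hA hC leAC.
have [CQ QC] := logical_le_range_proj hB hC leBC.
have [hJ PJ QJ _] := proj_joinP hP hQ; set J := proj_join ip P Q in hJ PJ QJ *.
have CJ : C \o J = J \o C.
  by apply: (proj_join_comm hC hP hQ); [rewrite CP PC | rewrite CQ QC].
have hX := selfadj_comp hC (orth_proj_selfadj hJ) CJ.
have upper D E : selfadj ip D -> orth_proj ip E -> C \o E = D -> proj_le E J ->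
    logical_le ip D (C \o J).
  move=> hD hE CE /(proj_leC hE hJ) JE.
  have XE : (C \o J) \o E = D by rewrite -compA JE.
  have EX := comp_sym_swap (selfadj_sym hX) (orth_proj_sym hE) (selfadj_sym hD) XE.
  by rewrite -{1}XE; apply: (logical_le_comp_proj hX hE); rewrite XE EX.
split=> //; [exact: upper hA hP CP PJ | exact: upper hB hQ CQ QJ |].
move=> Y hY leAY leBY.
have [YP PY] := logical_le_range_proj hA hY leAY.
have [YQ QY] := logical_le_range_proj hB hY leBY.
(* [Y - C] vanishes on the ranges of [P] and [Q], hence on that of their join. *)
have WJ : (fun x => Y x - C x) \o J = @zero_op R H.
  apply: (proj_join_kernel (selfadj_sub hY hC) hP hQ); apply/funext => x /=.
    by rewrite (comp_eq_app YP) (comp_eq_app CP) subrr.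
  by rewrite (comp_eq_app YQ) (comp_eq_app CQ) subrr.
have YJ : Y \o J = C \o J.
  by apply/funext => x; apply/eqP; rewrite -subr_eq0; apply/eqP; exact: (comp_eq_app WJ x).
rewrite -YJ; apply: (logical_le_comp_proj hY hJ).
by apply: (proj_join_comm hY hP hQ); [rewrite YP PY | rewrite YQ QY].
Qed.

End HilbertSpace.

Theorem corollary3 (R : realType) (H : completeNormedModType R[i])
    (ip : H -> H -> R[i]) (hH : hilbert_inner ip) (A B C : H -> H) :
  selfadj ip A -> selfadj ip B -> selfadj ip C ->
  logical_le ip A C -> logical_le ip B C ->
  is_meet_S ip A B
    (C \o proj_meet ip (range_proj ip A) (range_proj ip B)) /\
  is_join_S ip A B
    (C \o proj_join ip (range_proj ip A) (range_proj ip B)).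
Proof.
move=> hA hB hC leAC leBC.
split; first exact: (logical_meet hH hA hB hC leAC leBC).
exact: (logical_join hH hA hB hC leAC leBC).
Qed.
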